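(* Fix $b\in\mathbb{N}$ with $b\ge2$. Then, as $x\to\infty$, \[ \sum_{\substack{0<r\le x\\ 0<s\le x^b}}\gcd_b(r,s)=x^{b+1}\frac{\zeta(b)}{\zeta(b+1)}+O(E(x)), \] where the sum is over integers $r,s$, $\zeta$ is the Riemann zeta function, and $E(x)=x^2\log x$ if $b=2$, $E(x)=x^b$ if $b>2$.
   Context: For $b\in\mathbb{N}$ and $r,s\in\mathbb{N}$, $\gcd_b(r,s)=\max\{k\in\mathbb{N} : k\mid r \text{ and } k^b\mid s\}$. *)

From HB Require Import structures.
From mathcomp Require Import all_boot all_order all_algebra.
From mathcomp Require Import all_classical all_reals all_analysis.
Set Implicit Arguments. Unset Strict Implicit. Unset Printing Implicit Defensive.
Import Order.TTheory GRing.Theory Num.Theory.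
Local Open Scope ring_scope.

(* gcd_b(r,s) = max { k in N : k | r and k^b | s }, for r > 0
   (every such k satisfies k <= r, so the max over k <= r is exact). *)
Definition gcdb (b r s : nat) : nat :=
  (\max_(k < r.+1 | (k %| r) && (k ^ b %| s)) k)%N.

Definition zeta (R : realType) (s : nat) : R :=
  limn (fun n : nat => \sum_(1 <= k < n) ((k%:R : R) ^+ s)^-1).

Definition Sgcd (R : realType) (b : nat) (x : R) : R :=
  (\sum_(1 <= r < (Num.truncn x).+1)
     \sum_(1 <= s < (Num.truncn (x ^+ b)).+1) gcdb b r s)%N%:R.

Definition Eerr (R : realType) (b : nat) (x : R) : R :=
  if b == 2%N then x ^+ 2 * ln x else x ^+ b.

(* gcd_b(r, s) = \sum_(d | r, d^b | s) phi(d), because the k with k | r and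
   k^b | s are exactly the divisors of gcd_b(r, s) (this set is closed under
   lcm, as lcm(k, l)^b = lcm(k^b, l^b)).  Exchanging the sums gives
     S(x) = \sum_(d <= X) phi(d) floor(X/d) floor(Y/d^b),  X = floor x, Y = floor x^b.
   Replacing the floors by x/d and x^b/d^b costs at most
   phi(d) (x/d + x^b/d^b) <= x + x^b/d^(b-1) per term, i.e. O(x^2) + x^b H(x)
   with H(x) = \sum_(d <= x) d^(1-b), which is O(log x) for b = 2 and O(1) for
   b > 2; completing \sum_(d <= X) phi(d)/d^(b+1) to the full series costs
   x^(b+1) O(1/x).  Finally \sum_d phi(d)/d^(b+1) = zeta(b)/zeta(b+1): by Gauss's
   identity \sum_(d | n) phi(d) = n, the product of the N-th partial sums of
   this series and of zeta(b+1) lies between the N-th and the N^2-th partial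
   sums of zeta(b). *)

From HB Require Import structures.
From mathcomp Require Import all_boot all_order all_algebra.
From mathcomp Require Import all_classical all_reals all_analysis.
From mathcomp Require Import cyclic ring lra.
Import Order.TTheory GRing.Theory Num.Theory.
Import numFieldNormedType.Exports.

Lemma expn_gcdn k m n : gcdn m n ^ k = gcdn (m ^ k) (n ^ k).
Proof.
have [->|m_gt0] := posnP m.
  by case: k => [|k]; rewrite ?expn0 ?gcdnn // exp0n // !gcd0n.
set g := gcdn m n; have g_gt0 : 0 < g by rewrite gcdn_gt0 m_gt0.
have [m' Dm] : exists m', m = m' * g by apply/dvdnP; apply: dvdn_gcdl.
have [n' Dn] : exists n', n = n' * g by apply/dvdnP; apply: dvdn_gcdr.
have co_mn' : coprime m' n'.
  by rewrite /coprime -(eqn_pmul2r g_gt0) mul1n muln_gcdl -Dm -Dn.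
rewrite Dm Dn !expnMn -muln_gcdl.
by move/eqP: (coprimeXl k (coprimeXr k co_mn')) ->; rewrite mul1n.
Qed.

Lemma expn_lcmn k m n : lcmn m n ^ k = lcmn (m ^ k) (n ^ k).
Proof.
have [->|m_gt0] := posnP m; last have [->|n_gt0] := posnP n.
- by case: k => [|k]; rewrite ?expn0 ?lcm1n // exp0n // !lcm0n exp0n.
- by case: k => [|k]; rewrite ?expn0 ?lcmn1 // exp0n // !lcmn0 exp0n.
have gk_gt0 : 0 < gcdn m n ^ k by rewrite expn_gt0 gcdn_gt0 m_gt0.
apply/eqP; rewrite -(eqn_pmul2r gk_gt0) {2}expn_gcdn muln_lcm_gcd.
by rewrite -expnMn muln_lcm_gcd expnMn.
Qed.

Lemma dvdn_gcdb b r s k : 0 < r -> (k %| gcdb b r s) = (k %| r) && (k ^ b %| s).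
Proof.
move=> r_gt0; set P := fun i : 'I_r.+1 => (i %| r) && (i ^ b %| s).
pose one := Ordinal (r_gt0 : 1 < r.+1).
have P1 : P one by rewrite /P dvd1n exp1n dvd1n.
have [g Pg maxg] : exists2 g : 'I_r.+1, P g & gcdb b r s = g.
  exists [arg max_(i > one | P i) i]; first by case: arg_maxnP.
  exact: bigmax_eq_arg.
have /andP[g_r g_s] := Pg; rewrite maxg.
apply/idP/andP => [k_g | [k_r k_s]].
  by rewrite (dvdn_trans k_g g_r) (dvdn_trans (dvdn_exp2r b k_g) g_s).
have k_gt0 : 0 < k by case: posnP k_r => // ->; rewrite dvd0n gtn_eqF.
have l_r : lcmn k g %| r by rewrite dvdn_lcm k_r g_r.
have l_le : lcmn k g < r.+1 by rewrite ltnS dvdn_leq.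
have : lcmn k g <= gcdb b r s.
  by apply: (leq_bigmax_cond (Ordinal l_le)); rewrite l_r expn_lcmn dvdn_lcm k_s g_s.
rewrite maxg leq_eqVlt ltnNge dvdn_leq ?dvdn_lcmr ?lcmn_gt0 ?k_gt0 ?(dvdn_gt0 r_gt0) //.
by rewrite orbF => /eqP <-; rewrite dvdn_lcml.
Qed.

Lemma sum_totient_dvdn_nat m n : 0 < m -> m <= n ->
  \sum_(1 <= d < n.+1 | d %| m) totient d = m.
Proof.
move=> m_gt0 le_mn; rewrite -[RHS](sum_totient_dvd m).
rewrite -(big_mkord (fun d => d %| m) totient).
rewrite [RHS]big_ltn_cond // dvd0n gtn_eqF // [RHS](big_nat_widen _ _ n.+1) ?ltnS //.
by apply: eq_bigl => d; case: (boolP (d %| m)) => //= /(dvdn_leq m_gt0).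
Qed.

Lemma gcdb_sum_totient b r s n : 0 < r -> r <= n ->
  gcdb b r s = \sum_(1 <= d < n.+1 | (d %| r) && (d ^ b %| s)) totient d.
Proof.
move=> r_gt0 le_rn; set g := gcdb b r s.
have /andP[g_r _] : (g %| r) && (g ^ b %| s) by rewrite -dvdn_gcdb.
have g_gt0 : 0 < g by apply: dvdn_gt0 r_gt0 g_r.
rewrite -[LHS](sum_totient_dvdn_nat _ _ g_gt0 (leq_trans (dvdn_leq r_gt0 g_r) le_rn)).
by apply: eq_bigl => d; rewrite dvdn_gcdb.
Qed.

Lemma sum_gcdb b X Y :
  \sum_(1 <= r < X.+1) \sum_(1 <= s < Y.+1) gcdb b r s =
  \sum_(1 <= d < X.+1) totient d * (X %/ d) * (Y %/ d ^ b).
Proof.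
transitivity (\sum_(1 <= r < X.+1) \sum_(1 <= s < Y.+1) \sum_(1 <= d < X.+1)
                totient d * (d %| r) * (d ^ b %| s)).
  apply: eq_big_nat => r /andP[r_gt0 r_le]; apply: eq_bigr => s _.
  rewrite (gcdb_sum_totient b r s X r_gt0 r_le) big_mkcond; apply: eq_bigr => d _.
  by case: (d %| r); case: (d ^ b %| s); rewrite ?muln0 ?muln1.
rewrite exchange_big_nat; under eq_bigr do rewrite exchange_big_nat.
rewrite exchange_big_nat; apply: eq_bigr => d _.
rewrite !divn_count_dvd [RHS]big_distrr; apply: eq_bigr => s _.
by rewrite big_distrr big_distrl.
Qed.

Lemma totient_le n : totient n <= n.
Proof.
rewrite totient_count_coprime.
apply: (@leq_trans (\sum_(0 <= d < n) 1)%N); first by apply: leq_sum => d _; exact: leq_b1.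
by rewrite sum_nat_const_nat subn0 muln1.
Qed.

Local Open Scope ring_scope.

Section Estimates.
Variable R : realType.

Definition zeta_sum (s N : nat) : R := \sum_(1 <= k < N) ((k%:R : R) ^+ s)^-1.

Definition totient_sum (s N : nat) : R :=
  \sum_(1 <= d < N) (totient d)%:R / (d%:R : R) ^+ s.

Lemma inv_natX_le_sqr k s : (0 < k)%N -> (2 <= s)%N ->
  ((k%:R : R) ^+ s)^-1 <= ((k%:R : R) ^+ 2)^-1.
Proof.
move=> k_gt0 s_ge2; rewrite lef_pV2 ?posrE ?exprn_gt0 ?ltr0n //.
by rewrite -!natrX ler_nat leq_pexp2l.
Qed.

Lemma sum_inv_sqr_le m n : (0 < m)%N -> (m <= n)%N ->
  \sum_(m.+1 <= k < n.+1) ((k%:R : R) ^+ 2)^-1 <= m%:R^-1 - n%:R^-1.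
Proof.
move=> m_gt0; elim: n => [|n IH]; first by rewrite leqn0 => /eqP m0; rewrite m0 in m_gt0.
rewrite leq_eqVlt => /predU1P[<- | lt_mn]; first by rewrite big_geq // subrr.
rewrite big_nat_recr //=.
have t_gt0 : 0 < n%:R :> R by rewrite ltr0n (leq_trans m_gt0).
have step : ((n.+1%:R : R) ^+ 2)^-1 <= n%:R^-1 - n.+1%:R^-1.
  rewrite -natr1; move: t_gt0; set t : R := n%:R => t_gt0.
  have -> : t^-1 - (t + 1)^-1 = (t * (t + 1))^-1 by field; rewrite !gt_eqF ?ltr_wpDr.
  by rewrite lef_pV2 ?posrE ?exprn_gt0 ?mulr_gt0 ?ltr_wpDr // expr2 ler_wpM2r ?lerDl ?ler_wpDr // ltW.
by have := lerD (IH lt_mn) step; rewrite addrA subrK.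
Qed.

Lemma zeta_sum_le2 s N : (2 <= s)%N -> zeta_sum s N <= 2.
Proof.
move=> s_ge2; apply: (@le_trans _ _ (zeta_sum 2 N)).
  by apply: ler_sum_nat => k /andP[k_gt0 _]; exact: inv_natX_le_sqr.
case: N => [|n]; first by rewrite /zeta_sum big_geq.
case: n => [|n]; first by rewrite /zeta_sum big_geq.
rewrite /zeta_sum big_ltn // expr1n invr1.
apply: le_trans (lerD (lexx 1) (sum_inv_sqr_le 1 n.+1 isT isT)) _.
by rewrite invr1 addrA lerBlDr lerDl invr_ge0 ler0n.
Qed.

Lemma zeta_sum_nd s : nondecreasing_seq (zeta_sum s).
Proof.
by apply: nondecreasing_series => k _ _; rewrite invr_ge0 exprn_ge0 ?ler0n.
Qed.

Lemma is_cvg_zeta_sum s : (2 <= s)%N -> cvgn (zeta_sum s : R ^nat).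
Proof.
move=> s_ge2; apply: nondecreasing_is_cvgn; first exact: zeta_sum_nd.
by exists 2 => _ [n _ <-]; exact: zeta_sum_le2.
Qed.

Lemma zeta_sum_le_zeta s n : (2 <= s)%N -> zeta_sum s n <= zeta R s.
Proof.
by move=> s_ge2; exact: (nondecreasing_cvgn_le (zeta_sum_nd s) (is_cvg_zeta_sum s s_ge2)).
Qed.

Lemma zeta_ge1 s : (2 <= s)%N -> 1 <= zeta R s.
Proof.
move=> s_ge2; apply: le_trans (zeta_sum_le_zeta s 2 s_ge2).
by rewrite /zeta_sum big_nat1 expr1n invr1.
Qed.

Lemma natr_divXS n s : (0 < n)%N -> n%:R / n%:R ^+ s.+1 = ((n%:R : R) ^+ s)^-1.
Proof. by move=> n_gt0; rewrite exprS invfM mulrA mulfV ?mul1r // pnatr_eq0 -lt0n. Qed.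

Lemma totient_term_le s d : (0 < d)%N ->
  (totient d)%:R / (d%:R : R) ^+ s.+1 <= ((d%:R : R) ^+ s)^-1.
Proof.
move=> d_gt0; rewrite -(natr_divXS d s d_gt0).
by rewrite ler_pM2r ?invr_gt0 ?exprn_gt0 ?ltr0n // ler_nat totient_le.
Qed.

Lemma totient_sum_le_zeta_sum s N : totient_sum s.+1 N <= zeta_sum s N.
Proof. by apply: ler_sum_nat => d /andP[d_gt0 _]; exact: totient_term_le. Qed.

Lemma totient_sum_nd s : nondecreasing_seq (totient_sum s).
Proof. by apply: nondecreasing_series => d _ _; rewrite divr_ge0 ?exprn_ge0 ?ler0n. Qed.

Lemma is_cvg_totient_sum s : (2 <= s)%N -> cvgn (totient_sum s.+1 : R ^nat).
Proof.
move=> s_ge2; apply: nondecreasing_is_cvgn; first exact: totient_sum_nd.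
exists 2 => _ [n _ <-].
exact: le_trans (totient_sum_le_zeta_sum s n) (zeta_sum_le2 s n s_ge2).
Qed.

Lemma sum_mul_nat (g : nat -> R) d M : (0 < d)%N ->
  \sum_(1 <= m < M.+1) g (d * m)%N = \sum_(1 <= n < (d * M).+1 | (d %| n)%N) g n.
Proof.
move=> d_gt0; elim: M => [|M IH]; first by rewrite muln0 !big_geq.
have le_dM : (d * M <= d * M.+1)%N by rewrite leq_mul2l leqnSn orbT.
rewrite big_nat_recr //= IH [RHS](big_cat_nat _ (n := (d * M).+1)) //=; congr (_ + _).
rewrite big_mkcond big_nat_recr /=; last by rewrite mulnS addnC -addn1 leq_add2l.
rewrite dvdn_mulr // big1_seq ?add0r // => n /andP[_].
rewrite mem_index_iota => /andP[lo hi]; case: ifP => // /dvdnP[q Dn].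
rewrite Dn mulnC ltn_pmul2r // in lo; rewrite Dn mulnC ltn_pmul2l // in hi.
by rewrite ltnS leqNgt lo in hi.
Qed.

Lemma sum_totient_dvdn_sum (g : nat -> R) M :
  \sum_(1 <= d < M.+1) (totient d)%:R * \sum_(1 <= n < M.+1 | (d %| n)%N) g n
  = \sum_(1 <= n < M.+1) n%:R * g n.
Proof.
under eq_bigr do rewrite big_distrr /=.
rewrite (exchange_big_dep_nat predT) //=; apply: eq_big_nat => n /andP[n_gt0 n_le].
by rewrite -mulr_suml -natr_sum sum_totient_dvdn_nat // -ltnS.
Qed.

Lemma zeta_sum_squeeze s N :
  zeta_sum s N <= totient_sum s.+1 N * zeta_sum s.+1 N <= zeta_sum s (N * N).
Proof.
case: N => [|N]; first by rewrite /zeta_sum /totient_sum !big_geq // mul0r lexx.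
pose f n := ((n%:R : R) ^+ s.+1)^-1.
have f_ge0 n : 0 <= f n by rewrite invr_ge0 exprn_ge0 ?ler0n.
have prodE : totient_sum s.+1 N.+1 * zeta_sum s.+1 N.+1 =
    \sum_(1 <= d < N.+1) (totient d)%:R * \sum_(1 <= n < (d * N).+1 | (d %| n)%N) f n.
  rewrite /totient_sum mulr_suml; apply: eq_big_nat => d /andP[d_gt0 _].
  rewrite -mulrA -sum_mul_nat // /zeta_sum big_distrr; congr (_ * _); apply: eq_bigr => m _.
  by rewrite /f natrM exprMn invfM.
have zetaE M : zeta_sum s M.+1 =
    \sum_(1 <= d < M.+1) (totient d)%:R * \sum_(1 <= n < M.+1 | (d %| n)%N) f n.
  rewrite sum_totient_dvdn_sum; apply: eq_big_nat => n /andP[n_gt0 _].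
  by rewrite natr_divXS.
have inner_mono d m1 m2 : (m1 <= m2)%N ->
    (totient d)%:R * \sum_(1 <= n < m1 | (d %| n)%N) f n
    <= (totient d)%:R * \sum_(1 <= n < m2 | (d %| n)%N) f n.
  by move=> le_m; rewrite ler_wpM2l ?ler0n //; apply: nondecreasing_series.
rewrite prodE zetaE; apply/andP; split.
  by apply: ler_sum_nat => d /andP[d_gt0 _]; rewrite inner_mono // ltnS leq_pmull.
apply: le_trans (_ : _ <= zeta_sum s (N * N).+1) _; last first.
  by apply: zeta_sum_nd; rewrite ltn_mul.
rewrite zetaE; apply: le_trans (_ : _ <= \sum_(1 <= d < N.+1) (totient d)%:R *
    \sum_(1 <= n < (N * N).+1 | (d %| n)%N) f n) _.
  by apply: ler_sum_nat => d /andP[_ d_le]; apply: inner_mono; rewrite ltnS leq_mul.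
have outer_mono : nondecreasing_seq (fun m => \sum_(1 <= d < m)
    (totient d)%:R * \sum_(1 <= n < (N * N).+1 | (d %| n)%N) f n).
  by apply: nondecreasing_series => d _ _; rewrite mulr_ge0 ?ler0n ?sumr_ge0.
by apply: outer_mono; rewrite ltnS; case: (N) => // n; exact: leq_pmulr.
Qed.

Lemma lim_totient_sum_mul_zeta s : (2 <= s)%N ->
  limn (totient_sum s.+1) * zeta R s.+1 = zeta R s.
Proof.
move=> s_ge2; have s1_ge2 : (2 <= s.+1)%N by apply: leqW.
have cvgA := is_cvg_totient_sum s s_ge2; have cvgZ := is_cvg_zeta_sum s.+1 s1_ge2.
have cvgAZ : cvgn (totient_sum s.+1 \* zeta_sum s.+1 : R ^nat) by exact: is_cvgM.
rewrite -[zeta R s.+1]/(limn (zeta_sum s.+1)) -limM //.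
apply/eqP; rewrite eq_le; apply/andP; split.
  apply: limr_le => //; apply: nearW => N /=.
  have /andP[_ ub] := zeta_sum_squeeze s N.
  exact: le_trans ub (zeta_sum_le_zeta s _ s_ge2).
apply: ler_lim => //; first exact: is_cvg_zeta_sum.
by apply: nearW => N; have /andP[] := zeta_sum_squeeze s N.
Qed.

Lemma lim_totient_sum_bounds s n : (2 <= s)%N -> (0 < n)%N ->
  totient_sum s.+1 n.+1 <= limn (totient_sum s.+1) <= totient_sum s.+1 n.+1 + n%:R^-1.
Proof.
move=> s_ge2 n_gt0; have cvgA := is_cvg_totient_sum s s_ge2.
rewrite (nondecreasing_cvgn_le (totient_sum_nd _)) //=.
apply: limr_le => //; apply: nearW => m.
have inv_ge0 : 0 <= n%:R^-1 :> R by rewrite invr_ge0 ler0n.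
have [le_m | lt_m] := leqP m n.+1.
  by apply: le_trans (totient_sum_nd _ _ _ le_m) _; rewrite lerDl.
case: m lt_m => // k; rewrite ltnS => /ltnW le_nk.
rewrite /totient_sum (big_cat_nat _ (n := n.+1)) //= lerD2l.
apply: le_trans (_ : _ <= \sum_(n.+1 <= d < k.+1) ((d%:R : R) ^+ 2)^-1) _.
  apply: ler_sum_nat => d /andP[lt_nd _]; have d_gt0 := ltn_trans n_gt0 lt_nd.
  exact: le_trans (totient_term_le s d d_gt0) (inv_natX_le_sqr d s d_gt0 s_ge2).
apply: le_trans (sum_inv_sqr_le n k n_gt0 le_nk) _.
by rewrite lerBlDr lerDl invr_ge0 ler0n.
Qed.

Lemma inv_le_ln_diff (t : R) : 0 < t -> (t + 1)^-1 <= ln (t + 1) - ln t.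
Proof.
move=> t_gt0; have t1_gt0 : 0 < t + 1 by rewrite ltr_wpDr.
have : -1 < - (t + 1)^-1 by rewrite ltrN2 invf_lt1 // ltrDr.
move/le_ln1Dx; have -> : 1 - (t + 1)^-1 = t / (t + 1) by field; rewrite gt_eqF.
rewrite ln_div ?posrE //; lra.
Qed.

Lemma zeta_sum1_le_ln (x : R) : 1 <= x -> zeta_sum 1 (Num.truncn x).+1 <= 1 + ln x.
Proof.
move=> x_ge1; have harmonic n : zeta_sum 1 n.+2 <= 1 + ln n.+1%:R.
  elim: n => [|n IH]; first by rewrite /zeta_sum big_nat1 ln1 expr1 invr1 addr0.
  rewrite /zeta_sum big_nat_recr //= -/(zeta_sum 1 n.+2) expr1 -[n.+2%:R]natr1.
  have := inv_le_ln_diff _ (ltr0Sn R n); lra.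
have /andP[X_le _] := truncn_itv (le_trans ler01 x_ge1).
have : (0 < Num.truncn x)%N by rewrite truncn_gt0.
case: (Num.truncn x) X_le => // n le_nx _.
apply: le_trans (harmonic n) _; rewrite lerD2l ler_ln ?posrE ?ltr0Sn //.
exact: lt_le_trans ltr01 x_ge1.
Qed.

Lemma truncn_divn_bounds (w : R) d : 0 <= w -> (0 < d)%N ->
  w / d%:R - 1 <= (Num.truncn w %/ d)%:R <= w / d%:R.
Proof.
move=> w_ge0 d_gt0; have /andP[W_le W_gt] := truncn_itv w_ge0.
have d_pos : 0 < d%:R :> R by rewrite ltr0n.
set W := Num.truncn w in W_le W_gt *; set q := (W %/ d)%N.
have qd_le : ((q * d)%:R : R) <= W%:R by rewrite ler_nat leq_trunc_div.
have W_lt : (W.+1%:R : R) <= (q.+1 * d)%:R by rewrite ler_nat ltn_ceil.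
rewrite !natrM -natr1 in qd_le W_lt; rewrite -natr1 in W_gt.
rewrite lerBlDr !ler_pdivrMr ?ler_pdivlMr //; apply/andP; split; nra.
Qed.

Lemma Sgcd_totientE b (x : R) : Sgcd b x = \sum_(1 <= d < (Num.truncn x).+1)
  (totient d)%:R * ((Num.truncn x %/ d)%:R * (Num.truncn (x ^+ b) %/ d ^ b)%:R).
Proof.
rewrite /Sgcd sum_gcdb natr_sum; apply: eq_bigr => d _.
by rewrite !natrM mulrA.
Qed.

Lemma mul_totient_sumE b (x : R) N : x ^+ b.+1 * totient_sum b.+1 N =
  \sum_(1 <= d < N) (totient d)%:R * (x / d%:R * (x ^+ b / d%:R ^+ b)).
Proof.
rewrite /totient_sum big_distrr; apply: eq_bigr => d _.
by rewrite mulf_div -!exprS [LHS]mulrCA.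
Qed.

Lemma normB_mul_floor_le (q1 q2 u v : R) :
  0 <= q1 -> u - 1 <= q1 <= u -> 0 <= q2 -> v - 1 <= q2 <= v ->
  `|q1 * q2 - u * v| <= u + v.
Proof.
move=> q1_ge0 /andP[q1_lo q1_hi] q2_ge0 /andP[q2_lo q2_hi].
have u_ge0 : 0 <= u by apply: le_trans q1_hi.
by rewrite ler_norml; apply/andP; split; nra.
Qed.

Lemma totient_floor_err b (x : R) d : 0 <= x -> (0 < d)%N ->
  `|(totient d)%:R * ((Num.truncn x %/ d)%:R * (Num.truncn (x ^+ b.+1) %/ d ^ b.+1)%:R)
    - (totient d)%:R * (x / d%:R * (x ^+ b.+1 / d%:R ^+ b.+1))|
  <= x + x ^+ b.+1 / d%:R ^+ b.
Proof.
move=> x_ge0 d_gt0; rewrite -mulrBr normrM ger0_norm ?ler0n //.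
have db_gt0 : (0 < d ^ b.+1)%N by rewrite expn_gt0 d_gt0.
have := truncn_divn_bounds _ _ (exprn_ge0 b.+1 x_ge0) db_gt0; rewrite natrX => q2_bounds.
have q1_bounds := truncn_divn_bounds x d x_ge0 d_gt0.
have err := normB_mul_floor_le _ _ _ _ (ler0n _ _) q1_bounds (ler0n _ _) q2_bounds.
apply: le_trans (ler_wpM2l (ler0n _ _) err) _.
apply: le_trans (ler_wpM2r (le_trans (normr_ge0 _) err) (_ : _ <= d%:R)) _.
  by rewrite ler_nat totient_le.
by rewrite mulrDr mulrCA mulfV ?pnatr_eq0 -?lt0n // mulr1 mulrCA natr_divXS.
Qed.

Lemma Sgcd_partial_err b (x : R) : 0 <= x ->
  `|Sgcd b.+1 x - x ^+ b.+2 * totient_sum b.+2 (Num.truncn x).+1|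
  <= (Num.truncn x)%:R * x + x ^+ b.+1 * zeta_sum b (Num.truncn x).+1.
Proof.
move=> x_ge0; rewrite Sgcd_totientE mul_totient_sumE -sumrB.
apply: le_trans (ler_norm_sum _ _ _) _.
apply: le_trans (ler_sum_nat (G := fun d => x + x ^+ b.+1 / d%:R ^+ b) _) _.
  by move=> d /andP[d_gt0 _]; exact: totient_floor_err.
by rewrite big_split sumr_const_nat subn1 /= mulr_natl -big_distrr.
Qed.

Lemma Sgcd_err b (x : R) : (0 < b)%N -> 1 <= x ->
  `|Sgcd b.+1 x - x ^+ b.+2 * limn (totient_sum b.+2)|
  <= x ^+ 2 + x ^+ b.+1 * zeta_sum b (Num.truncn x).+1 + 2 * x ^+ b.+1.
Proof.
move=> b_gt0 x_ge1; have x_ge0 : 0 <= x by apply: le_trans x_ge1.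
have /andP[X_le X_gt] := truncn_itv x_ge0.
have X_gt0 : (0 < Num.truncn x)%N by rewrite truncn_gt0.
set X := Num.truncn x in X_le X_gt X_gt0 *.
have /andP[A_le L_le] := lim_totient_sum_bounds b.+1 X b_gt0 X_gt0.
set A := totient_sum b.+2 X.+1 in A_le L_le *.
set L := limn (totient_sum b.+2) in A_le L_le *.
have X_ge1 : 1 <= X%:R :> R by rewrite ler1n.
have xb_ge0 : 0 <= x ^+ b.+1 by rewrite exprn_ge0.
have head : X%:R * x <= x ^+ 2 by rewrite expr2 ler_wpM2r.
have tail : x ^+ b.+2 * (L - A) <= 2 * x ^+ b.+1.
  have LA : L - A <= X%:R^-1 by lra.
  have xX : x / X%:R <= 2.
    by rewrite ler_pdivrMr ?(lt_le_trans ltr01 X_ge1) // -natr1 in X_gt *; lra.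
  apply: le_trans (ler_wpM2l (exprn_ge0 _ x_ge0) LA) _.
  by rewrite exprS mulrAC; exact: ler_wpM2r xb_ge0 _ _ xX.
have -> : Sgcd b.+1 x - x ^+ b.+2 * L =
  (Sgcd b.+1 x - x ^+ b.+2 * A) - x ^+ b.+2 * (L - A) by ring.
apply: le_trans (ler_normB _ _) _.
have tail_ge0 : 0 <= x ^+ b.+2 * (L - A) by rewrite mulr_ge0 ?exprn_ge0 ?subr_ge0.
rewrite (ger0_norm tail_ge0); apply: lerD => //.
by apply: le_trans (Sgcd_partial_err b x x_ge0) _; rewrite lerD2r.
Qed.

End Estimates.

Theorem mainTheorem3 (R : realType) (b : nat) (hb : (2 <= b)%N) :
  exists (C x0 : R), forall x : R, x0 <= x ->
    `| Sgcd b x - x ^+ b.+1 * (zeta R b / zeta R b.+1) | <= C * Eerr b x.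
Proof.
case: b hb => [|b] // hb.
have -> : zeta R b.+1 / zeta R b.+2 = limn (totient_sum R b.+2).
  rewrite -(lim_totient_sum_mul_zeta R b.+1 hb) mulfK // gt_eqF //.
  exact: lt_le_trans ltr01 (zeta_ge1 R b.+2 (leqW hb)).
exists 5, (expR 1) => x x_ge_e.
have x_ge1 : 1 <= x by apply: le_trans x_ge_e; rewrite -expR0 ler_expR.
have ln_ge1 : 1 <= ln x by rewrite -[1](@expRK R) ler_ln ?posrE ?expR_gt0 // (lt_le_trans ltr01).
have x2_ge0 : 0 <= x ^+ 2 by rewrite exprn_ge0 // (le_trans ler01).
apply: le_trans (Sgcd_err R b x hb x_ge1) _; rewrite /Eerr eqSS.
case: eqP => [b1 | /eqP b_neq1]; first subst b.
  have Z_le := zeta_sum1_le_ln R x x_ge1.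
  have : x ^+ 2 * zeta_sum R 1 (Num.truncn x).+1 <= x ^+ 2 * (1 + ln x) by rewrite ler_wpM2l.
  nra.
have b_ge2 : (2 <= b)%N by rewrite ltn_neqAle eq_sym b_neq1; exact: hb.
have Z_le := zeta_sum_le2 R b (Num.truncn x).+1 b_ge2.
have x2_le : x ^+ 2 <= x ^+ b.+1 by rewrite ler_weXn2l.
have : x ^+ b.+1 * zeta_sum R b (Num.truncn x).+1 <= x ^+ b.+1 * 2.
  by rewrite ler_wpM2l // (le_trans x2_ge0).
lra.
Qed.
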